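(* Let $p$ be a prime and $b$ an integer with $0<b<\frac{p-1}{2}$. Then $(p-b)(p-b^{-1})=2p+1$ if and only if $\frac{p-1}{3}\in\mathbb{Z}$ and $b=\frac{p-1}{3}$.
   Context: $b^{-1}$ is the unique integer $0<b^{-1}<p$ with $bb^{-1}\equiv1\pmod p$. *)

From mathcomp Require Import all_boot.
Set Implicit Arguments. Unset Strict Implicit. Unset Printing Implicit Defensive.

Definition is_modinv (p b binv : nat) : Prop :=
  0 < binv < p /\ b * binv = 1 %[mod p].

(** The cofactor [p - b] exceeds [(p + 1) / 2], so [(p - b) (p - b^-1) = 2p + 1]
    forces [p - b^-1 <= 3]; the values [1] and [2] are excluded by size and
    parity, and [3] gives [p = 3b + 1].  Conversely, if [p = 3b + 1] then
    [b (p - 3) = (b - 1) p + 1], so [b^-1 = p - 3] and the product is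
    [3 (p - b) = 2p + 1]. *)
From mathcomp Require Import all_boot.
From mathcomp Require Import zify.

Set Implicit Arguments.
Unset Strict Implicit.
Unset Printing Implicit Defensive.

Lemma prime_coprime_lt (p b : nat) : prime p -> 0 < b < p -> coprime p b.
Proof. by move=> pr_p /andP [b_gt0 b_lt]; rewrite prime_coprime // gtnNdvd. Qed.

Lemma modinv_unique (p b x y : nat) :
  coprime p b -> x < p -> y < p ->
  b * x = 1 %[mod p] -> b * y = 1 %[mod p] -> x = y.
Proof.
move=> cop_pb.
wlog le_yx : x y / y <= x => [hwlog x_lt y_lt bx by_ | x_lt _ bx by_].
  by case/orP: (leq_total y x) => le; [|symmetry]; apply: hwlog.
have /dvdnP [k def_xy] : p %| x - y.
  rewrite -(Gauss_dvdr _ cop_pb) mulnBr -eqn_mod_dvd ?leq_mul2l ?le_yx ?orbT //.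
  by rewrite bx by_.
have : k * p < p by rewrite -def_xy; lia.
by case: k def_xy => [|k] /=; lia.
Qed.

Lemma mul_subn3_mod_3n1 (p b : nat) :
  p = 3 * b + 1 -> 0 < b -> b * (p - 3) = 1 %[mod p].
Proof.
move=> def_p b_gt0.
have -> : b * (p - 3) = (b - 1) * p + 1 by rewrite def_p; nia.
by rewrite modnMDl.
Qed.

Lemma mul_subn_eq_2p1 (p b y : nat) :
  2 * b < p - 1 -> (p - b) * y = 2 * p + 1 -> y = 3 /\ p = 3 * b + 1.
Proof.
move=> hb E.
have y_le3 : y <= 3.
  rewrite leqNgt; apply/negP => y_gt3.
  have : 4 * (p - b) <= (p - b) * y by rewrite mulnC leq_mul2l y_gt3 orbT.
  by rewrite E; lia.
by move: E y_le3; case: y => [|[|[|[|y]]]] //=; lia.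
Qed.

Lemma dvdn_divn_eq (d n b : nat) :
  0 < d -> (d %| n /\ b = n %/ d) <-> n = d * b.
Proof.
move=> d_gt0; split=> [[dvd_dn ->] | ->]; first by rewrite mulnC divnK.
by rewrite dvdn_mulr // mulKn.
Qed.

Theorem lemma5p3 (p b binv : nat) :
  prime p -> 0 < b -> 2 * b < p - 1 -> is_modinv p b binv ->
  ((p - b) * (p - binv) = 2 * p + 1 <->
   (3 %| p - 1 /\ b = (p - 1) %/ 3)).
Proof.
move=> pr_p b_gt0 hb [/andP [binv_gt0 binv_lt] binvP].
have p_gt0 := prime_gt0 pr_p.
rewrite dvdn_divn_eq //; split=> [E | def_p1].
  by have [_ ->] := mul_subn_eq_2p1 hb E; lia.
have def_p : p = 3 * b + 1 by lia.
have -> : binv = p - 3.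
  have cop_pb : coprime p b by apply: prime_coprime_lt; lia.
  apply: (modinv_unique cop_pb) => //; first lia.
  exact: mul_subn3_mod_3n1.
lia.
Qed.
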